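(* Let a target $T$ be fixed at a point $(x_T,y_T)\in\mathbb{R}^2$, and consider a UAV with dynamics $\dot x=V\cos\psi$, $\dot y=V\sin\psi$, $\dot\psi=\omega$, $V>0$ constant. Let $r(t)$ be the distance from the UAV to $T$ and $\theta(t)\in[0,2\pi)$ the bearing angle. Let the control input be $$\omega=\begin{cases} k\left[V\cos\!\left(\pi-\sin^{-1}\!\left(\frac{r_a}{r(t)}\right)\right)-\dot r(t)\right], & r(t)\ge r_a,\\ 0,&\text{otherwise},\end{cases}$$ with constants $k>0$ and $r_a\ge 0$. Then for any initial bearing $\theta(0)$ there exists $t^\star\ge 0$ such that $\theta(t)\in[0,\pi]$ for all $t\ge t^\star$.
   Context: The bearing angle $\theta(t)\in[0,2\pi)$ is the angle measured counterclockwise from the vector pointing from the UAV's current position to $T$ to the UAV's current heading $(\cos\psi,\sin\psi)$. In these variables the dynamics read $\dot r=-V\cos\theta$, $\dot\theta=\omega+\frac{V\sin\theta}{r}$. $\sin^{-1}$ is the principal arcsine. *)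

From Stdlib Require Import Reals.
From Coquelicot Require Import Coquelicot.
Open Scope R_scope.

Definition dist_T (xT yT x y : R) : R := sqrt ((xT - x)^2 + (yT - y)^2).

(* Bearing angle: theta in [0,2pi) is the counterclockwise angle from the
   vector u = T - P to the heading h = (cos psi, sin psi), i.e.
   r cos theta = u . h  and  r sin theta = u x h  (r = |u| > 0). *)
Definition is_bearing (xT yT x y psi theta : R) : Prop :=
  0 <= theta < 2 * PI /\
  dist_T xT yT x y * cos theta = (xT - x) * cos psi + (yT - y) * sin psi /\
  dist_T xT yT x y * sin theta = (xT - x) * sin psi - (yT - y) * cos psi.

(* time derivative of r along the dynamics xdot = V cos psi, ydot = V sin psi:
   rdot = ((x - xT) xdot + (y - yT) ydot) / r *)
Definition rdot (V xT yT x y psi : R) : R :=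
  ((x - xT) * (V * cos psi) + (y - yT) * (V * sin psi)) / dist_T xT yT x y.

Definition omega_law (k V ra xT yT x y psi : R) : R :=
  let r := dist_T xT yT x y in
  if Rle_dec ra r
  then k * (V * cos (PI - asin (ra / r)) - rdot V xT yT x y psi)
  else 0.

(* Closed-loop trajectory on [0, +oo), in integral (Caratheodory) form,
   which allows the discontinuous switching of omega at r = ra. *)
Definition closed_loop (V k ra xT yT : R) (x y psi : R -> R) : Prop :=
  forall t, 0 <= t ->
    is_RInt (fun s => V * cos (psi s)) 0 t (x t - x 0) /\
    is_RInt (fun s => V * sin (psi s)) 0 t (y t - y 0) /\
    is_RInt (fun s => omega_law k V ra xT yT (x s) (y s) (psi s)) 0 t
            (psi t - psi 0).

From Stdlib Require Import Reals Lra Psatz Classical.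
From Coquelicot Require Import Coquelicot.
Open Scope R_scope.

(* Write p = r cos theta and q = r sin theta.  Along the closed loop p' = - V - omega q, q' = omega p and
   (r^2)' = - 2 V p, where r omega = k V (p - r sqrt (1 - (ra / r)^2)) if r >= ra and omega = 0 otherwise.
   Since p omega >= - k V |q|, Gronwall's lemma makes the half plane q >= 0 forward invariant.  If q < 0
   forever, then - q omega <= k V max p 0, so p + V t + k r^2 / 2 does not increase and p reaches 0; from
   then on p <= - V (t - t1), hence q is nondecreasing, q >= q(t1), and once p <= q(t1) - ra the steering
   term gives q' >= - k V q(t1) / 2, so q becomes nonnegative after all.  Because omega jumps at r = ra,
   the trajectory is only a Caratheodory solution, and all differential inequalities are proved in the
   upper right Dini form, from second-order expansions of the integral equations. *)

(** * Elementary trigonometric bounds *)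

Lemma Rabs_sub_le_of_derive (f f' : R -> R) (a b M : R) :
  (forall c, derivable_pt_lim f c (f' c)) ->
  (forall c, Rmin a b <= c <= Rmax a b -> Rabs (f' c) <= M) ->
  Rabs (f a - f b) <= M * Rabs (a - b).
Proof.
  intros Hd HM.
  assert (Hmvt : forall s t, s < t -> (forall c, s <= c <= t -> Rabs (f' c) <= M) ->
            Rabs (f t - f s) <= M * (t - s)).
  { intros s t Hst Hb.
    destruct (MVT_cor2 f f' s t Hst (fun c _ => Hd c)) as [c [Hc Hcst]].
    rewrite Hc, Rabs_mult, (Rabs_right (t - s)) by lra.
    apply Rmult_le_compat_r; [lra | apply Hb; lra]. }
  destruct (Rtotal_order a b) as [Hab | [-> | Hab]].
  - rewrite <- Rabs_Ropp, Ropp_minus_distr, (Rabs_left (a - b)) by lra.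
    replace (- (a - b)) with (b - a) by ring.
    apply Hmvt; [lra |]. intros c Hc. apply HM.
    rewrite Rmin_left, Rmax_right; lra.
  - rewrite !Rminus_diag, Rabs_R0. lra.
  - rewrite (Rabs_right (a - b)) by lra.
    apply Hmvt; [lra |]. intros c Hc. apply HM.
    rewrite Rmin_right, Rmax_left; lra.
Qed.

Lemma Rabs_cos_sub_le a b : Rabs (cos a - cos b) <= Rabs (a - b).
Proof.
  rewrite <- (Rmult_1_l (Rabs (a - b))).
  apply (Rabs_sub_le_of_derive cos (fun c => - sin c)).
  - intro c. apply derivable_pt_lim_cos.
  - intros c _. rewrite Rabs_Ropp. apply Rabs_le. apply SIN_bound.
Qed.

Lemma Rabs_sin_sub_le a b : Rabs (sin a - sin b) <= Rabs (a - b).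
Proof.
  rewrite <- (Rmult_1_l (Rabs (a - b))).
  apply (Rabs_sub_le_of_derive sin cos).
  - intro c. apply derivable_pt_lim_sin.
  - intros c _. apply Rabs_le. apply COS_bound.
Qed.

Lemma one_sub_cos_bound x : 0 <= 1 - cos x <= x ^ 2 / 2.
Proof.
  assert (Hsin : Rabs (sin (x / 2)) <= Rabs (x / 2)).
  { pose proof (Rabs_sin_sub_le (x / 2) 0) as H.
    rewrite sin_0, !Rminus_0_r in H. exact H. }
  assert (Hsq : sin (x / 2) ^ 2 <= (x / 2) ^ 2).
  { rewrite <- (pow2_abs (sin (x / 2))), <- (pow2_abs (x / 2)).
    apply pow_incr. split; [apply Rabs_pos | exact Hsin]. }
  assert (Hcos : cos x = 1 - 2 * sin (x / 2) * sin (x / 2)).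
  { rewrite <- cos_2a_sin. f_equal. field. }
  rewrite Hcos. simpl in Hsq. split; nra.
Qed.

Lemma Rabs_sin_sub_id_le d : Rabs (sin d - d) <= d ^ 2.
Proof.
  replace (sin d - d) with (- ((d - sin d) - (0 - sin 0))) by (rewrite sin_0; ring).
  rewrite Rabs_Ropp, <- pow2_abs.
  replace (Rabs d ^ 2) with (Rabs d * Rabs (d - 0)) by (rewrite Rminus_0_r; ring).
  apply (Rabs_sub_le_of_derive (fun z => z - sin z) (fun z => 1 - cos z)).
  - intro c. apply derivable_pt_lim_minus; [apply derivable_pt_lim_id | apply derivable_pt_lim_sin].
  - intros c Hc.
    pose proof (Rabs_cos_sub_le 0 c) as H. rewrite cos_0, Rminus_0_l, Rabs_Ropp in H.
    eapply Rle_trans; [exact H |].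
    unfold Rmin, Rmax in Hc. destruct (Rle_dec d 0);
      unfold Rabs; destruct (Rcase_abs c), (Rcase_abs d); lra.
Qed.

Definition rot (a b p : R) : R := a * cos p + b * sin p.

Lemma rot_sub a b a' b' p : rot a' b' p - rot a b p = rot (a' - a) (b' - b) p.
Proof. unfold rot. ring. Qed.

Lemma Rabs_rot_le a b p : Rabs (rot a b p) <= Rabs a + Rabs b.
Proof.
  unfold rot. eapply Rle_trans; [apply Rabs_triang |]. rewrite !Rabs_mult.
  pose proof (Rabs_pos a). pose proof (Rabs_pos b).
  assert (Rabs (cos p) <= 1) by (apply Rabs_le; apply COS_bound).
  assert (Rabs (sin p) <= 1) by (apply Rabs_le; apply SIN_bound).
  pose proof (Rabs_pos (cos p)). pose proof (Rabs_pos (sin p)). nra.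
Qed.

Lemma rot_sub_PI2 a b p : rot a b (p - PI / 2) = a * sin p - b * cos p.
Proof. unfold rot. rewrite cos_minus, sin_minus, cos_PI2, sin_PI2. ring. Qed.

Lemma rot_sub_PI a b p : rot a b (p - PI) = - rot a b p.
Proof. unfold rot. rewrite cos_minus, sin_minus, cos_PI, sin_PI. ring. Qed.

Lemma rot_sq a b p : rot a b p ^ 2 + rot a b (p - PI / 2) ^ 2 = a ^ 2 + b ^ 2.
Proof.
  rewrite rot_sub_PI2. unfold rot. pose proof (sin2_cos2 p) as H. unfold Rsqr in H.
  transitivity ((a ^ 2 + b ^ 2) * (sin p * sin p + cos p * cos p)); [ring | rewrite H; ring].
Qed.

Lemma rot_heading c p : rot (cos p) (sin p) (p - c) = cos c.
Proof.
  unfold rot. rewrite cos_minus, sin_minus.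
  pose proof (sin2_cos2 p) as H. unfold Rsqr in H.
  transitivity (cos c * (sin p * sin p + cos p * cos p)); [ring | rewrite H; ring].
Qed.

Lemma Rabs_rot_angle_sub_le a b p q : Rabs (rot a b q - rot a b p) <= (Rabs a + Rabs b) * Rabs (q - p).
Proof.
  unfold rot.
  replace (a * cos q + b * sin q - (a * cos p + b * sin p))
    with (a * (cos q - cos p) + b * (sin q - sin p)) by ring.
  eapply Rle_trans; [apply Rabs_triang |]. rewrite !Rabs_mult.
  pose proof (Rabs_cos_sub_le q p). pose proof (Rabs_sin_sub_le q p).
  pose proof (Rabs_pos a). pose proof (Rabs_pos b).
  pose proof (Rabs_pos (cos q - cos p)). pose proof (Rabs_pos (sin q - sin p)). nra.
Qed.

(* [rot a b (p + PI / 2)] is the derivative of [rot a b] at [p]. *)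
Lemma Rabs_rot_taylor_le a b p d :
  Rabs (rot a b (p + d) - rot a b p - d * rot a b (p + PI / 2)) <= 2 * (Rabs a + Rabs b) * d ^ 2.
Proof.
  assert (E : rot a b (p + d) - rot a b p - d * rot a b (p + PI / 2)
            = (cos d - 1) * rot a b p + (sin d - d) * rot a b (p + PI / 2)).
  { unfold rot. rewrite !cos_plus, !sin_plus, cos_PI2, sin_PI2. ring. }
  rewrite E. eapply Rle_trans; [apply Rabs_triang |]. rewrite !Rabs_mult.
  pose proof (Rabs_rot_le a b p). pose proof (Rabs_rot_le a b (p + PI / 2)).
  pose proof (one_sub_cos_bound d). pose proof (Rabs_sin_sub_id_le d).
  assert (Rabs (cos d - 1) <= d ^ 2) by (apply Rabs_le; nra).
  pose proof (Rabs_pos (cos d - 1)). pose proof (Rabs_pos (sin d - d)).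
  pose proof (Rabs_pos (rot a b p)). pose proof (Rabs_pos (rot a b (p + PI / 2))).
  nra.
Qed.

(** * Dini derivatives and Gronwall's lemma *)

Definition lipschitz_on (g : R -> R) (a b K : R) : Prop :=
  forall s t, a <= s -> s <= t -> t <= b -> Rabs (g t - g s) <= K * (t - s).

Definition locally_lipschitz_from (g : R -> R) (a : R) : Prop :=
  forall b, exists K, lipschitz_on g a b K.

Definition upper_dini_le (g : R -> R) (t m : R) : Prop :=
  forall eps, 0 < eps -> exists delta, 0 < delta /\
    forall h, 0 < h -> h < delta -> g (t + h) - g t <= (m + eps) * h.

Lemma upper_dini_le_of_quadratic (g : R -> R) t m C delta :
  0 < delta -> (forall h, 0 < h -> h < delta -> g (t + h) - g t <= (m + C * h) * h) ->
  upper_dini_le g t m.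
Proof.
  intros Hdelta Hg eps Heps.
  set (C' := Rabs C + 1).
  assert (HC' : 0 < C') by (unfold C'; pose proof (Rabs_pos C); lra).
  exists (Rmin delta (eps / C')). split; [apply Rmin_pos; [lra | apply Rdiv_lt_0_compat; lra] |].
  intros h Hh Hhd.
  assert (h < eps / C') by (eapply Rlt_le_trans; [exact Hhd | apply Rmin_r]).
  assert (C' * h < eps) by (apply (Rmult_lt_reg_r (/ C')); [apply Rinv_0_lt_compat; lra |];
    replace (C' * h * / C') with h by (field; lra); exact H).
  eapply Rle_trans; [apply Hg; [lra | eapply Rlt_le_trans; [exact Hhd | apply Rmin_l]] |].
  apply Rmult_le_compat_r; [lra |]. pose proof (Rle_abs C). unfold C' in *. nra.
Qed.

Lemma real_induction (P : R -> Prop) a b :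
  a <= b -> P a ->
  (forall t, a < t <= b -> (forall s, a <= s < t -> P s) -> P t) ->
  (forall t, a <= t < b -> P t -> exists delta, 0 < delta /\ forall s, t < s < t + delta -> P s) ->
  P b.
Proof.
  intros Hab Ha Hclosed Hstep.
  set (E := fun t => a <= t <= b /\ forall s, a <= s <= t -> P s).
  assert (HEa : E a) by (split; [lra | intros s Hs; replace s with a by lra; exact Ha]).
  assert (HEb : bound E) by (exists b; intros t [Ht _]; lra).
  destruct (completeness E HEb (ex_intro _ a HEa)) as [c [Hub Hlub]].
  assert (Hac : a <= c) by (apply Hub; exact HEa).
  assert (Hcb : c <= b) by (apply Hlub; intros t [Ht _]; lra).
  assert (Hbelow : forall s, a <= s < c -> P s).
  { intros s Hs. apply NNPP. intro HPs.
    assert (c <= s); [| lra].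
    apply Hlub. intros t [Ht HPt]. destruct (Rle_lt_dec t s) as [| Hst]; [assumption |].
    exfalso. apply HPs, HPt. lra. }
  assert (HPc : P c).
  { destruct (Req_dec c a) as [-> | Hca]; [exact Ha | apply Hclosed; [lra | exact Hbelow]]. }
  destruct (Rle_lt_or_eq_dec c b Hcb) as [Hcb' | <-]; [| exact HPc].
  destruct (Hstep c (conj Hac Hcb') HPc) as [delta [Hdelta HPd]].
  set (t := Rmin (c + delta / 2) b).
  assert (Htb : t <= b) by apply Rmin_r.
  assert (Htd : t <= c + delta / 2) by apply Rmin_l.
  assert (Hct : c < t) by (apply Rmin_glb_lt; lra).
  assert (Ht : E t).
  { split; [lra |].
    intros s Hs. destruct (Rlt_le_dec s c) as [| Hcs]; [apply Hbelow; lra |].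
    destruct (Req_dec s c) as [-> | Hsc]; [exact HPc |].
    apply HPd. lra. }
  pose proof (Hub t Ht). lra.
Qed.

Lemma nonincreasing_of_upper_dini (g : R -> R) a b K :
  a <= b -> lipschitz_on g a b K -> (forall t, a <= t < b -> upper_dini_le g t 0) ->
  g b <= g a.
Proof.
  intros Hab HK Hd.
  assert (Hslope : forall eps, 0 < eps -> g b <= g a + eps * (b - a)).
  { intros eps Heps.
    (* Left continuity closes the bound, the Dini bound pushes it to the right. *)
    apply (real_induction (fun s => g s <= g a + eps * (s - a)) a b Hab); [lra | |].
    - intros t Ht Hbelow. apply Rle_plus_epsilon. intros eta Heta.
      set (s := Rmax a (t - eta / (Rabs K + 1))).
      assert (Hq : 0 < eta / (Rabs K + 1)) by (apply Rdiv_lt_0_compat; pose proof (Rabs_pos K); lra).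
      assert (Has : a <= s) by apply Rmax_l.
      assert (Hst : s < t) by (apply Rmax_lub_lt; lra).
      assert (Hts : t - s <= eta / (Rabs K + 1)) by (unfold s; pose proof (Rmax_r a (t - eta / (Rabs K + 1))); lra).
      assert (HKst : K * (t - s) <= eta).
      { apply Rle_trans with ((Rabs K + 1) * (eta / (Rabs K + 1))).
        - pose proof (Rle_abs K). pose proof (Rabs_pos K). nra.
        - right. field. pose proof (Rabs_pos K). lra. }
      pose proof (Hbelow s (conj Has Hst)).
      pose proof (HK s t Has (Rlt_le _ _ Hst) (proj2 Ht)) as Hgs. apply Rabs_le_between' in Hgs.
      assert (eps * (s - a) <= eps * (t - a)) by (apply Rmult_le_compat_l; lra).
      lra.
    - intros t Ht HPt. destruct (Hd t Ht eps Heps) as [delta [Hdelta Hinc]].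
      exists delta. split; [exact Hdelta |]. intros s Hs.
      pose proof (Hinc (s - t) ltac:(lra) ltac:(lra)) as H.
      replace (t + (s - t)) with s in H by ring. nra. }
  apply Rle_plus_epsilon. intros eta Heta.
  assert (Hpos : 0 < eta / (b - a + 1)) by (apply Rdiv_lt_0_compat; lra).
  pose proof (Hslope _ Hpos).
  assert (eta / (b - a + 1) * (b - a) <= eta); [| lra].
  apply Rle_trans with (eta / (b - a + 1) * (b - a + 1)); [nra | right; field; lra].
Qed.

Lemma exp_neg_bounds x : 0 <= x -> 1 - x <= exp (- x) <= 1 /\ exp (- x) * (1 + x) <= 1.
Proof.
  intro Hx. pose proof (exp_ineq1_le (- x)). pose proof (exp_ineq1_le x).
  assert (Hinv : exp (- x) * exp x = 1) by (rewrite <- exp_plus, Rplus_opp_l; apply exp_0).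
  pose proof (exp_pos (- x)). pose proof (exp_pos x).
  split; [split |]; nra.
Qed.

Lemma exp_weight_bounds c a s : 0 <= c -> a <= s -> 0 < exp (- (c * (s - a))) <= 1.
Proof.
  intros Hc Has. split; [apply exp_pos |].
  apply (exp_neg_bounds (c * (s - a))). apply Rmult_le_pos; lra.
Qed.

Lemma exp_weight_shift c a s h : exp (- (c * (s + h - a))) = exp (- (c * (s - a))) * exp (- (c * h)).
Proof. rewrite <- exp_plus. f_equal. ring. Qed.

Lemma lipschitz_on_exp_weight (g : R -> R) a b c K M :
  0 <= c -> lipschitz_on g a b K -> (forall s, a <= s <= b -> 0 <= g s <= M) ->
  lipschitz_on (fun s => g s * exp (- (c * (s - a)))) a b (K + c * M).
Proof.
  intros Hc HK Hg s v Has Hsv Hvb.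
  rewrite <- (Rplus_minus s v), exp_weight_shift.
  pose proof (exp_weight_bounds c a s Hc Has) as HE.
  pose proof (exp_neg_bounds (c * (v - s)) ltac:(apply Rmult_le_pos; lra)) as Hq.
  pose proof (exp_pos (- (c * (v - s)))).
  pose proof (Hg s ltac:(lra)). pose proof (HK s v Has Hsv Hvb). pose proof (Rabs_pos (g v - g s)).
  set (E := exp (- (c * (s - a)))) in *. set (q := exp (- (c * (v - s)))) in *.
  replace (g (s + (v - s)) * (E * q) - g s * E) with ((g v - g s) * (E * q) - g s * E * (1 - q))
    by (rewrite Rplus_minus; ring).
  eapply Rle_trans; [apply Rabs_triang |]. rewrite Rabs_Ropp, !Rabs_mult.
  rewrite (Rabs_pos_eq E), (Rabs_pos_eq q), (Rabs_pos_eq (g s)), (Rabs_pos_eq (1 - q)) by lra.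
  assert (Rabs (g v - g s) * (E * q) <= K * (v - s)) by (assert (0 <= E * q <= 1) by (split; nra); nra).
  assert (g s * E * (1 - q) <= M * (c * (v - s))) by (apply Rmult_le_compat; nra).
  lra.
Qed.

Lemma upper_dini_le_exp_weight (g : R -> R) a c t :
  0 <= c -> a <= t -> 0 <= g t -> upper_dini_le g t (c * g t) ->
  upper_dini_le (fun s => g s * exp (- (c * (s - a)))) t 0.
Proof.
  intros Hc Hat Hgt Hd eps Heps. destruct (Hd eps Heps) as [delta [Hdelta Hinc]].
  exists delta. split; [exact Hdelta |]. intros h Hh Hhd.
  rewrite exp_weight_shift.
  pose proof (Hinc h Hh Hhd) as Hg.
  pose proof (exp_weight_bounds c a t Hc Hat) as HE.
  pose proof (exp_neg_bounds (c * h) ltac:(apply Rmult_le_pos; lra)) as Hq.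
  pose proof (exp_pos (- (c * h))).
  set (E := exp (- (c * (t - a)))) in *. set (q := exp (- (c * h))) in *.
  assert (0 <= E * q <= 1) by (split; nra).
  assert (g (t + h) * (E * q) <= (g t + (c * g t + eps) * h) * (E * q))
    by (apply Rmult_le_compat_r; nra).
  assert (g t * E * (q * (1 + c * h)) <= g t * E * 1) by (apply Rmult_le_compat_l; nra).
  assert (eps * h * (E * q) <= eps * h) by (assert (0 <= eps * h) by nra; nra).
  nra.
Qed.

(* Gronwall: the weight [exp (- c (t - a))] turns [D+ g <= c g] into [D+ (g exp (- c (t - a))) <= 0]. *)
Lemma gronwall_zero (g : R -> R) a c :
  0 <= c -> locally_lipschitz_from g a ->
  (forall t, a <= t -> 0 <= g t) -> g a = 0 ->
  (forall t, a <= t -> upper_dini_le g t (c * g t)) ->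
  forall t, a <= t -> g t = 0.
Proof.
  intros Hc Hlip Hpos Ha Hd t Hat.
  destruct (Hlip t) as [K HK].
  assert (HM : forall s, a <= s <= t -> 0 <= g s <= Rabs K * (t - a)).
  { intros s Hs. split; [apply Hpos; lra |].
    pose proof (HK a s ltac:(lra) ltac:(lra) ltac:(lra)) as H.
    rewrite Ha, Rminus_0_r in H. pose proof (Rle_abs (g s)). pose proof (Rle_abs K).
    pose proof (Rabs_pos K). nra. }
  assert (Hf := nonincreasing_of_upper_dini _ a t _ Hat (lipschitz_on_exp_weight g a t c K _ Hc HK HM)
                  (fun s Hs => upper_dini_le_exp_weight g a c s Hc (proj1 Hs) (Hpos s (proj1 Hs))
                                 (Hd s (proj1 Hs)))).
  cbv beta in Hf. rewrite Ha, Rmult_0_l in Hf.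
  pose proof (exp_weight_bounds c a t Hc Hat). pose proof (Hpos t Hat).
  assert (g t <= 0) by nra. lra.
Qed.

Lemma Rabs_Rmax0_sub_le a b : Rabs (Rmax a 0 - Rmax b 0) <= Rabs (a - b).
Proof. unfold Rmax. destruct (Rle_dec a 0), (Rle_dec b 0); unfold Rabs; repeat destruct Rcase_abs; lra. Qed.

Lemma nonpos_persists (phi : R -> R) a c :
  0 <= c -> locally_lipschitz_from phi a -> phi a <= 0 ->
  (forall t, a <= t -> 0 <= phi t -> exists C delta, 0 < delta /\
     forall h, 0 < h -> h < delta -> phi (t + h) - phi t <= (c * phi t + C * h) * h) ->
  forall t, a <= t -> phi t <= 0.
Proof.
  intros Hc Hlip Ha Hd.
  set (g := fun s => Rmax (phi s) 0).
  assert (Hg : forall t, a <= t -> g t = 0).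
  { apply (gronwall_zero g a c Hc).
    - intro b. destruct (Hlip b) as [K HK]. exists K. intros s t Has Hst Htb.
      eapply Rle_trans; [apply Rabs_Rmax0_sub_le | apply HK; lra].
    - intros t _. apply Rmax_r.
    - apply Rmax_right. exact Ha.
    - intros t Hat. destruct (Rlt_le_dec (phi t) 0) as [Hneg | Hnn].
      + destruct (Hlip (t + 1)) as [K HK].
        assert (Hq : 0 < - phi t / (Rabs K + 1)) by (apply Rdiv_lt_0_compat; pose proof (Rabs_pos K); lra).
        apply (upper_dini_le_of_quadratic g t (c * g t) 0 (Rmin 1 (- phi t / (Rabs K + 1))));
          [apply Rmin_pos; lra |].
        intros h Hh Hhd.
        assert (h < 1) by (eapply Rlt_le_trans; [exact Hhd | apply Rmin_l]).
        assert (h < - phi t / (Rabs K + 1)) by (eapply Rlt_le_trans; [exact Hhd | apply Rmin_r]).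
        assert ((Rabs K + 1) * h < - phi t).
        { apply (Rmult_lt_reg_r (/ (Rabs K + 1))); [apply Rinv_0_lt_compat; pose proof (Rabs_pos K); lra |].
          replace ((Rabs K + 1) * h * / (Rabs K + 1)) with h by (field; pose proof (Rabs_pos K); lra).
          exact H0. }
        pose proof (HK t (t + h) Hat ltac:(lra) ltac:(lra)) as Hth. apply Rabs_le_between' in Hth.
        pose proof (Rle_abs K).
        unfold g. rewrite (Rmax_right (phi t)), (Rmax_right (phi (t + h))) by nra. lra.
      + destruct (Hd t Hat Hnn) as [C [delta [Hdelta Hinc]]].
        apply (upper_dini_le_of_quadratic g t (c * g t) (Rabs C) delta Hdelta).
        intros h Hh Hhd. specialize (Hinc h Hh Hhd).
        unfold g. rewrite (Rmax_left (phi t)) by lra.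
        pose proof (Rle_abs C).
        assert (0 <= (c * phi t + Rabs C * h) * h).
        { apply Rmult_le_pos; [| lra]. pose proof (Rabs_pos C). nra. }
        assert (Rmax (phi (t + h)) 0 <= phi t + (c * phi t + Rabs C * h) * h); [| lra].
        apply Rmax_lub; [| nra].
        assert (C * h * h <= Rabs C * h * h) by (apply Rmult_le_compat_r; [lra | nra]). nra. }
  intros t Hat. pose proof (Hg t Hat). pose proof (Rmax_l (phi t) 0). unfold g in *. lra.
Qed.

Lemma locally_lipschitz_plus (g1 g2 : R -> R) a :
  locally_lipschitz_from g1 a -> locally_lipschitz_from g2 a ->
  locally_lipschitz_from (fun t => g1 t + g2 t) a.
Proof.
  intros H1 H2 b. destruct (H1 b) as [K1 HK1], (H2 b) as [K2 HK2].
  exists (K1 + K2). intros s t Has Hst Htb.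
  replace (g1 t + g2 t - (g1 s + g2 s)) with ((g1 t - g1 s) + (g2 t - g2 s)) by ring.
  eapply Rle_trans; [apply Rabs_triang |].
  pose proof (HK1 s t Has Hst Htb). pose proof (HK2 s t Has Hst Htb). lra.
Qed.

Lemma locally_lipschitz_scal c (g : R -> R) a :
  locally_lipschitz_from g a -> locally_lipschitz_from (fun t => c * g t) a.
Proof.
  intros H b. destruct (H b) as [K HK]. exists (Rabs c * K). intros s t Has Hst Htb.
  rewrite <- Rmult_minus_distr_l, Rabs_mult, Rmult_assoc.
  apply Rmult_le_compat_l; [apply Rabs_pos | apply HK; lra].
Qed.

Lemma locally_lipschitz_linear c t0 a : locally_lipschitz_from (fun t => c * (t - t0)) a.
Proof.
  intro b. exists (Rabs c). intros s t _ Hst _.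
  replace (c * (t - t0) - c * (s - t0)) with (c * (t - s)) by ring.
  rewrite Rabs_mult, (Rabs_pos_eq (t - s)) by lra. lra.
Qed.

Lemma is_RInt_sub_from (f F : R -> R) a :
  (forall t, a <= t -> is_RInt f a t (F t - F a)) ->
  forall s t, a <= s -> s <= t -> is_RInt f s t (F t - F s).
Proof.
  intros H s t Has Hst.
  destruct (Rle_lt_or_eq_dec a s Has) as [Has' | <-]; [| apply H; lra].
  destruct (Rle_lt_or_eq_dec s t Hst) as [Hst' | <-].
  - replace (F t - F s) with (minus (F t - F a) (F s - F a))
      by (unfold minus, plus, opp; simpl; ring).
    apply (is_RInt_Chasles_2 f a s t); [lra | apply H; lra | apply H; lra].
  - rewrite Rminus_diag. exact (is_RInt_point f s).
Qed.

Lemma is_RInt_abs_sub_le (f : R -> R) s t l c M :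
  s <= t -> is_RInt f s t l -> (forall tau, s < tau < t -> Rabs (f tau - c) <= M) ->
  Rabs (l - c * (t - s)) <= M * (t - s).
Proof.
  intros Hst Hf Hb. apply Rabs_le_between'.
  assert (Hlo := is_RInt_le (fun _ => c - M) f s t _ l Hst (is_RInt_const s t (c - M)) Hf).
  assert (Hhi := is_RInt_le f (fun _ => c + M) s t l _ Hst Hf (is_RInt_const s t (c + M))).
  change (scal (t - s) (c - M)) with ((t - s) * (c - M)) in Hlo.
  change (scal (t - s) (c + M)) with ((t - s) * (c + M)) in Hhi.
  assert (Hbt : forall tau, s < tau < t -> c - M <= f tau <= c + M)
    by (intros tau Htau; apply Rabs_le_between', Hb, Htau).
  specialize (Hlo (fun tau Htau => proj1 (Hbt tau Htau))).
  specialize (Hhi (fun tau Htau => proj2 (Hbt tau Htau))).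
  lra.
Qed.

(* Freezing the factor [f] at the left endpoint costs at most its oscillation [e] times [W]. *)
Lemma is_RInt_frozen_lower (f w : R -> R) s t l m e W :
  s <= t -> is_RInt w s t l ->
  (forall tau, s < tau < t -> Rabs (f tau - f s) <= e) ->
  (forall tau, s < tau < t -> Rabs (w tau) <= W) ->
  (forall tau, s < tau < t -> m <= f tau * w tau) ->
  (m - e * W) * (t - s) <= f s * l.
Proof.
  intros Hst Hw He HW Hm.
  assert (H := is_RInt_le (fun _ => m - e * W) (fun tau => f s * w tau) s t _ (f s * l) Hst
                 (is_RInt_const s t (m - e * W)) (is_RInt_scal w s t (f s) l Hw)).
  change (scal (t - s) (m - e * W)) with ((t - s) * (m - e * W)) in H.
  assert (Hpt : forall tau, s < tau < t -> m - e * W <= f s * w tau).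
  { intros tau Htau. specialize (He tau Htau). specialize (HW tau Htau). specialize (Hm tau Htau).
    assert (Rabs ((f tau - f s) * w tau) <= e * W)
      by (rewrite Rabs_mult; apply Rmult_le_compat; auto using Rabs_pos).
    apply Rabs_le_between in H0.
    replace (f s * w tau) with (f tau * w tau - (f tau - f s) * w tau) by ring. lra. }
  specialize (H Hpt). lra.
Qed.

(** * The closed loop *)

Section ClosedLoop.

Variables (xT yT V k ra : R) (x y psi : R -> R).
Hypothesis HV : 0 < V.
Hypothesis Hk : 0 < k.
Hypothesis Hra : 0 <= ra.
Hypothesis Hloop : closed_loop V k ra xT yT x y psi.
Hypothesis Hdist : forall t, 0 <= t -> 0 < dist_T xT yT (x t) (y t).

Definition u1 t := xT - x t.
Definition u2 t := yT - y t.
Definition unorm t := Rabs (u1 t) + Rabs (u2 t).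
Definition r2 t := u1 t ^ 2 + u2 t ^ 2.
Definition omega t := omega_law k V ra xT yT (x t) (y t) (psi t).

(* The component of the vector from the UAV to the target along the heading turned by [- c]:
   [frame 0] and [frame (PI / 2)] are [r cos theta] and [r sin theta]. *)
Definition frame c t := rot (u1 t) (u2 t) (psi t - c).

Local Notation r t := (dist_T xT yT (x t) (y t)).
Local Notation rcos := (frame 0).
Local Notation rsin := (frame (PI / 2)).

Lemma rcos_def t : rcos t = u1 t * cos (psi t) + u2 t * sin (psi t).
Proof. unfold frame, rot. rewrite Rminus_0_r. reflexivity. Qed.

Lemma frame_PI t : frame PI t = - rcos t.
Proof. unfold frame. rewrite rot_sub_PI, Rminus_0_r. reflexivity. Qed.

Lemma r_sq t : r t ^ 2 = rcos t ^ 2 + rsin t ^ 2.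
Proof.
  unfold frame. rewrite Rminus_0_r, rot_sq. unfold dist_T, u1, u2.
  rewrite pow2_sqrt; [reflexivity |]. apply Rplus_le_le_0_compat; apply pow2_ge_0.
Qed.

Lemma omega_cases t : 0 <= t ->
  (r t < ra /\ omega t = 0) \/
  (exists S, 0 <= S <= 1 /\ omega t * r t = k * V * (rcos t - S * r t)).
Proof.
  intro Ht. pose proof (Hdist t Ht) as Hr.
  unfold omega, omega_law. cbv zeta.
  destruct (Rle_dec ra (r t)) as [Hle | Hlt]; [right | left; split; [lra | reflexivity]].
  assert (Hz : -1 <= ra / r t <= 1).
  { split; [apply Rle_trans with 0; [lra | apply Rdiv_le_0_compat; lra] |].
    apply Rmult_le_reg_r with (r t); [exact Hr |]. field_simplify; lra. }
  exists (sqrt (1 - (ra / r t)²)). split.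
  - split; [apply sqrt_pos |]. pose proof (Rle_0_sqr (ra / r t)).
    apply Rle_trans with (sqrt 1); [apply sqrt_le_1_alt; lra | rewrite sqrt_1; lra].
  - rewrite Rtrigo_facts.cos_pi_minus, cos_asin by exact Hz.
    rewrite rcos_def. unfold rdot, u1, u2. field. lra.
Qed.

Lemma frame_bounds t : 0 <= t -> - r t <= rcos t <= r t /\ - r t <= rsin t <= r t.
Proof. intro Ht. pose proof (Hdist t Ht). pose proof (r_sq t). split; split; nra. Qed.

Lemma omega_bound t : 0 <= t -> Rabs (omega t) <= 2 * k * V.
Proof.
  intro Ht. pose proof (Hdist t Ht) as Hr. destruct (frame_bounds t Ht) as [HA _].
  assert (HkV : 0 < k * V) by nra.
  destruct (omega_cases t Ht) as [[_ ->] | [S [HS Hw]]]; [rewrite Rabs_R0; lra |].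
  assert (Hb : - (2 * r t) <= rcos t - S * r t <= 2 * r t) by (split; nra).
  apply Rabs_le. split; apply (Rmult_le_reg_r (r t)); try rewrite Hw; nra.
Qed.

Lemma rcos_omega_ge_neg t : 0 <= t -> - (k * V) * Rabs (rsin t) <= rcos t * omega t.
Proof.
  intro Ht. pose proof (Hdist t Ht) as Hr. pose proof (r_sq t) as Hsq.
  destruct (frame_bounds t Ht) as [HA HB].
  assert (HkV : 0 < k * V) by nra.
  destruct (omega_cases t Ht) as [[_ ->] | [S [HS Hw]]];
    [pose proof (Rabs_pos (rsin t)); nra |].
  set (A := rcos t) in *. set (B := rsin t) in *.
  assert (Hkey : - (Rabs B * r t) <= A * (A - S * r t)).
  { pose proof (Rabs_pos B).
    destruct (Rle_lt_dec A 0) as [HA0 | HA0];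
      [assert (0 <= - A * S * r t) by (repeat apply Rmult_le_pos; nra); nra |].
    assert (r t <= A + Rabs B).
    { pose proof (Rabs_pos B). pose proof (pow2_abs B).
      destruct (Rle_lt_dec (r t) (A + Rabs B)) as [Hle | Hlt]; [exact Hle | nra]. }
    assert (0 <= A * r t * (1 - S)) by (apply Rmult_le_pos; [nra | lra]).
    assert (- (A * Rabs B) <= A * (A - r t)) by nra.
    assert (A * Rabs B <= r t * Rabs B) by (apply Rmult_le_compat_r; lra).
    nra. }
  apply (Rmult_le_reg_r (r t)); [exact Hr |].
  replace (A * omega t * r t) with (A * (omega t * r t)) by ring. rewrite Hw. nra.
Qed.

Lemma rsin_omega_le t : 0 <= t -> rsin t <= 0 -> - rsin t * omega t <= k * V * Rmax (rcos t) 0.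
Proof.
  intros Ht HB0. pose proof (Hdist t Ht) as Hr.
  destruct (frame_bounds t Ht) as [HA HB].
  assert (HkV : 0 < k * V) by nra.
  destruct (omega_cases t Ht) as [[_ ->] | [S [HS Hw]]];
    [pose proof (Rmax_r (rcos t) 0); nra |].
  set (A := rcos t) in *. set (B := rsin t) in *.
  assert (Hkey : - B * (A - S * r t) <= Rmax A 0 * r t).
  { pose proof (Rmax_l A 0). pose proof (Rmax_r A 0).
    assert (0 <= - B * S * r t) by (repeat apply Rmult_le_pos; nra). nra. }
  apply (Rmult_le_reg_r (r t)); [exact Hr |].
  replace (- B * omega t * r t) with (- B * (omega t * r t)) by ring. rewrite Hw. nra.
Qed.

Lemma rcos_omega_nonneg t : 0 <= t -> rcos t <= 0 -> 0 <= rcos t * omega t.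
Proof.
  intros Ht HA0. pose proof (Hdist t Ht) as Hr.
  assert (HkV : 0 < k * V) by nra.
  destruct (omega_cases t Ht) as [[_ ->] | [S [HS Hw]]]; [lra |].
  apply (Rmult_le_reg_r (r t)); [exact Hr |].
  replace (rcos t * omega t * r t) with (rcos t * (omega t * r t)) by ring.
  rewrite Rmult_0_l, Hw.
  assert (0 <= - rcos t * S * r t) by (repeat apply Rmult_le_pos; nra). nra.
Qed.

Lemma rcos_omega_ge t beta : 0 <= t -> 0 < beta ->
  rcos t <= - ra -> rcos t <= - beta -> Rabs (rsin t) <= beta ->
  k * V * beta / 2 <= rcos t * omega t.
Proof.
  intros Ht Hbeta HAra HAbeta HBbeta. pose proof (Hdist t Ht) as Hr. pose proof (r_sq t) as Hsq.
  destruct (frame_bounds t Ht) as [HA HB].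
  assert (HkV : 0 < k * V) by nra.
  destruct (omega_cases t Ht) as [[Hlt _] | [S [HS Hw]]]; [lra |].
  set (A := rcos t) in *. set (B := rsin t) in *.
  assert (Hr2 : r t <= - A + beta).
  { apply Rabs_le_between in HBbeta. destruct (Rle_lt_dec (r t) (- A + beta)) as [Hle | Hlt]; [exact Hle | nra]. }
  assert (Hkey : beta * r t / 2 <= A * (A - S * r t)).
  { assert (0 <= - A * S * r t) by (repeat apply Rmult_le_pos; nra). nra. }
  apply (Rmult_le_reg_r (r t)); [exact Hr |].
  replace (A * omega t * r t) with (A * (omega t * r t)) by ring. rewrite Hw. nra.
Qed.

Lemma psi_integral s t : 0 <= s -> s <= t -> is_RInt omega s t (psi t - psi s).
Proof. apply (is_RInt_sub_from omega psi 0). intros; apply Hloop; lra. Qed.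

Lemma psi_lipschitz s t : 0 <= s -> s <= t -> Rabs (psi t - psi s) <= 2 * k * V * (t - s).
Proof.
  intros Hs Hst. rewrite <- (Rminus_0_r (psi t - psi s)), <- (Rmult_0_l (t - s)).
  apply (is_RInt_abs_sub_le omega s t); [exact Hst | apply psi_integral; lra |].
  intros tau Htau. rewrite Rminus_0_r. apply omega_bound. lra.
Qed.

Lemma heading_step (F trig : R -> R) :
  (forall a b, Rabs (trig a - trig b) <= Rabs (a - b)) -> (forall a, Rabs (trig a) <= 1) ->
  (forall t, 0 <= t -> is_RInt (fun s => V * trig (psi s)) 0 t (F t - F 0)) ->
  forall s t, 0 <= s -> s <= t ->
    Rabs (F t - F s) <= V * (t - s) /\
    Rabs (F t - F s - V * trig (psi s) * (t - s)) <= 2 * k * V ^ 2 * (t - s) ^ 2.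
Proof.
  intros Hlip Hbd HF s t Hs Hst.
  pose proof (is_RInt_sub_from _ F 0 HF s t Hs Hst) as Hint. split.
  - rewrite <- (Rminus_0_r (F t - F s)), <- (Rmult_0_l (t - s)).
    apply (is_RInt_abs_sub_le _ s t _ _ _ Hst Hint). intros tau _.
    rewrite Rminus_0_r, Rabs_mult, Rabs_pos_eq by lra.
    pose proof (Hbd (psi tau)). nra.
  - replace (2 * k * V ^ 2 * (t - s) ^ 2) with ((V * (2 * k * V * (t - s))) * (t - s)) by ring.
    apply (is_RInt_abs_sub_le _ s t _ _ _ Hst Hint). intros tau Htau.
    rewrite <- Rmult_minus_distr_l, Rabs_mult, (Rabs_pos_eq V) by lra.
    apply Rmult_le_compat_l; [lra |].
    eapply Rle_trans; [apply Hlip |]. eapply Rle_trans; [apply psi_lipschitz; lra |].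
    apply Rmult_le_compat_l; [nra | lra].
Qed.

Lemma u1_step s t : 0 <= s -> s <= t ->
  Rabs (u1 t - u1 s) <= V * (t - s) /\
  Rabs (u1 t - u1 s + V * cos (psi s) * (t - s)) <= 2 * k * V ^ 2 * (t - s) ^ 2.
Proof.
  intros Hs Hst.
  destruct (heading_step x cos Rabs_cos_sub_le (fun a => ltac:(apply Rabs_le; apply COS_bound))
              (fun t Ht => proj1 (Hloop t Ht)) s t Hs Hst) as [H1 H2].
  unfold u1. split.
  - replace (xT - x t - (xT - x s)) with (- (x t - x s)) by ring. rewrite Rabs_Ropp. exact H1.
  - replace (xT - x t - (xT - x s) + V * cos (psi s) * (t - s))
      with (- (x t - x s - V * cos (psi s) * (t - s))) by ring. rewrite Rabs_Ropp. exact H2.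
Qed.

Lemma u2_step s t : 0 <= s -> s <= t ->
  Rabs (u2 t - u2 s) <= V * (t - s) /\
  Rabs (u2 t - u2 s + V * sin (psi s) * (t - s)) <= 2 * k * V ^ 2 * (t - s) ^ 2.
Proof.
  intros Hs Hst.
  destruct (heading_step y sin Rabs_sin_sub_le (fun a => ltac:(apply Rabs_le; apply SIN_bound))
              (fun t Ht => proj1 (proj2 (Hloop t Ht))) s t Hs Hst) as [H1 H2].
  unfold u2. split.
  - replace (yT - y t - (yT - y s)) with (- (y t - y s)) by ring. rewrite Rabs_Ropp. exact H1.
  - replace (yT - y t - (yT - y s) + V * sin (psi s) * (t - s))
      with (- (y t - y s - V * sin (psi s) * (t - s))) by ring. rewrite Rabs_Ropp. exact H2.
Qed.

Lemma unorm_nonneg t : 0 <= unorm t.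
Proof. unfold unorm. pose proof (Rabs_pos (u1 t)). pose proof (Rabs_pos (u2 t)). lra. Qed.

Lemma unorm_le t : 0 <= t -> unorm t <= unorm 0 + 2 * V * t.
Proof.
  intro Ht. destruct (u1_step 0 t) as [H1 _], (u2_step 0 t) as [H2 _]; try lra.
  unfold unorm. pose proof (Rabs_triang_inv (u1 t) (u1 0)). pose proof (Rabs_triang_inv (u2 t) (u2 0)).
  lra.
Qed.

Lemma frame_lipschitz c : locally_lipschitz_from (frame c) 0.
Proof.
  intro b. exists (2 * V + (unorm 0 + 2 * V * b) * (2 * k * V)).
  intros s t Hs Hst Htb. unfold frame.
  destruct (u1_step s t Hs Hst) as [H1 _], (u2_step s t Hs Hst) as [H2 _].
  pose proof (psi_lipschitz s t Hs Hst) as Hpsi. pose proof (unorm_le s Hs) as Hu.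
  replace (rot (u1 t) (u2 t) (psi t - c) - rot (u1 s) (u2 s) (psi s - c))
    with ((rot (u1 t) (u2 t) (psi t - c) - rot (u1 s) (u2 s) (psi t - c))
          + (rot (u1 s) (u2 s) (psi t - c) - rot (u1 s) (u2 s) (psi s - c))) by ring.
  eapply Rle_trans; [apply Rabs_triang |]. rewrite rot_sub.
  pose proof (Rabs_rot_le (u1 t - u1 s) (u2 t - u2 s) (psi t - c)).
  pose proof (Rabs_rot_angle_sub_le (u1 s) (u2 s) (psi s - c) (psi t - c)) as Hang.
  replace (psi t - c - (psi s - c)) with (psi t - psi s) in Hang by ring.
  fold (unorm s) in Hang.
  assert (unorm s * Rabs (psi t - psi s) <= (unorm 0 + 2 * V * b) * (2 * k * V * (t - s))).
  { apply Rmult_le_compat; try apply Rabs_pos; [apply unorm_nonneg | | exact Hpsi].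
    assert (V * s <= V * b) by (apply Rmult_le_compat_l; lra). lra. }
  lra.
Qed.

Lemma r2_lipschitz : locally_lipschitz_from r2 0.
Proof.
  intro b. exists (2 * V * (unorm 0 + 2 * V * b)).
  intros s t Hs Hst Htb. unfold r2.
  destruct (u1_step s t Hs Hst) as [H1 _], (u2_step s t Hs Hst) as [H2 _].
  pose proof (unorm_le s Hs). pose proof (unorm_le t ltac:(lra)).
  replace (u1 t ^ 2 + u2 t ^ 2 - (u1 s ^ 2 + u2 s ^ 2))
    with ((u1 t - u1 s) * (u1 t + u1 s) + (u2 t - u2 s) * (u2 t + u2 s)) by ring.
  eapply Rle_trans; [apply Rabs_triang |]. rewrite !Rabs_mult.
  set (W := unorm 0 + 2 * V * b).
  assert (Hsum : Rabs (u1 t + u1 s) + Rabs (u2 t + u2 s) <= 2 * W).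
  { pose proof (Rabs_triang (u1 t) (u1 s)). pose proof (Rabs_triang (u2 t) (u2 s)).
    assert (V * s <= V * b) by (apply Rmult_le_compat_l; lra).
    assert (V * t <= V * b) by (apply Rmult_le_compat_l; lra). unfold W, unorm in *. lra. }
  assert (T1 : Rabs (u1 t - u1 s) * Rabs (u1 t + u1 s) <= V * (t - s) * Rabs (u1 t + u1 s))
    by (apply Rmult_le_compat_r; [apply Rabs_pos | exact H1]).
  assert (T2 : Rabs (u2 t - u2 s) * Rabs (u2 t + u2 s) <= V * (t - s) * Rabs (u2 t + u2 s))
    by (apply Rmult_le_compat_r; [apply Rabs_pos | exact H2]).
  assert (V * (t - s) * (Rabs (u1 t + u1 s) + Rabs (u2 t + u2 s)) <= V * (t - s) * (2 * W))
    by (apply Rmult_le_compat_l; [nra | exact Hsum]).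
  lra.
Qed.

Lemma r2_step t h : 0 <= t -> 0 <= h ->
  r2 (t + h) - r2 t <= (- 2 * V * rcos t + (4 * k * V ^ 2 * unorm t + 2 * V ^ 2) * h) * h.
Proof.
  intros Ht Hh.
  destruct (u1_step t (t + h) Ht ltac:(lra)) as [H1 E1], (u2_step t (t + h) Ht ltac:(lra)) as [H2 E2].
  replace (t + h - t) with h in * by ring.
  set (e1 := u1 (t + h) - u1 t + V * cos (psi t) * h) in *.
  set (e2 := u2 (t + h) - u2 t + V * sin (psi t) * h) in *.
  assert (Hid : r2 (t + h) - r2 t + 2 * V * h * rcos t
              = 2 * u1 t * e1 + 2 * u2 t * e2 + (u1 (t + h) - u1 t) ^ 2 + (u2 (t + h) - u2 t) ^ 2).
  { rewrite rcos_def. unfold r2, e1, e2. ring. }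
  assert (T1 : 2 * u1 t * e1 <= 2 * Rabs (u1 t) * (2 * k * V ^ 2 * h ^ 2)).
  { pose proof (Rle_abs (2 * u1 t * e1)). rewrite !Rabs_mult, (Rabs_pos_eq 2) in H by lra.
    pose proof (Rabs_pos (u1 t)). nra. }
  assert (T2 : 2 * u2 t * e2 <= 2 * Rabs (u2 t) * (2 * k * V ^ 2 * h ^ 2)).
  { pose proof (Rle_abs (2 * u2 t * e2)). rewrite !Rabs_mult, (Rabs_pos_eq 2) in H by lra.
    pose proof (Rabs_pos (u2 t)). nra. }
  assert (T3 : (u1 (t + h) - u1 t) ^ 2 <= (V * h) ^ 2)
    by (rewrite <- pow2_abs; apply pow_incr; split; [apply Rabs_pos | exact H1]).
  assert (T4 : (u2 (t + h) - u2 t) ^ 2 <= (V * h) ^ 2)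
    by (rewrite <- pow2_abs; apply pow_incr; split; [apply Rabs_pos | exact H2]).
  unfold unorm. nra.
Qed.

(* The kinematics of every frame component to second order: its derivative is
   [- V cos c + omega * frame (c - PI / 2)]. *)
Lemma frame_step c t h : 0 <= t -> 0 <= h ->
  Rabs (frame c (t + h) - frame c t + V * h * cos c - (psi (t + h) - psi t) * frame (c - PI / 2) t)
    <= (8 * k ^ 2 * V ^ 2 * unorm t + 8 * k * V ^ 2) * h ^ 2.
Proof.
  intros Ht Hh.
  destruct (u1_step t (t + h) Ht ltac:(lra)) as [H1 E1], (u2_step t (t + h) Ht ltac:(lra)) as [H2 E2].
  pose proof (psi_lipschitz t (t + h) Ht ltac:(lra)) as Hd.
  replace (t + h - t) with h in * by ring.
  set (d := psi (t + h) - psi t) in *. set (p := psi t - c).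
  set (a := u1 t) in *. set (b := u2 t) in *. set (a' := u1 (t + h)) in *. set (b' := u2 (t + h)) in *.
  assert (Hid : frame c (t + h) - frame c t + V * h * cos c - d * frame (c - PI / 2) t
    = (rot a b (p + d) - rot a b p - d * rot a b (p + PI / 2))
      + (rot (a' - a) (b' - b) (p + d) - rot (a' - a) (b' - b) p)
      + rot (a' - a + V * cos (psi t) * h) (b' - b + V * sin (psi t) * h) p).
  { unfold frame. fold a b a' b'.
    replace (psi (t + h) - c) with (p + d) by (unfold p, d; ring).
    replace (psi t - (c - PI / 2)) with (p + PI / 2) by (unfold p; ring).
    rewrite <- (rot_heading c (psi t)). fold p. unfold rot. ring. }
  rewrite Hid. clear Hid.
  pose proof (Rabs_rot_taylor_le a b p d) as T1.
  pose proof (Rabs_rot_angle_sub_le (a' - a) (b' - b) p (p + d)) as T2.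
  replace (p + d - p) with d in T2 by ring.
  pose proof (Rabs_rot_le (a' - a + V * cos (psi t) * h) (b' - b + V * sin (psi t) * h) p) as T3.
  assert (Hd2 : d ^ 2 <= (2 * k * V * h) ^ 2)
    by (rewrite <- pow2_abs; apply pow_incr; split; [apply Rabs_pos | exact Hd]).
  assert (T1' : 2 * unorm t * d ^ 2 <= 8 * k ^ 2 * V ^ 2 * unorm t * h ^ 2).
  { pose proof (unorm_nonneg t).
    apply Rle_trans with (2 * unorm t * (2 * k * V * h) ^ 2); [apply Rmult_le_compat_l; lra | right; ring]. }
  assert (T2' : (Rabs (a' - a) + Rabs (b' - b)) * Rabs d <= (2 * V * h) * (2 * k * V * h)).
  { apply Rmult_le_compat; [pose proof (Rabs_pos (a' - a)); pose proof (Rabs_pos (b' - b)); lra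
                           | apply Rabs_pos | lra | exact Hd]. }
  eapply Rle_trans; [apply Rabs_triang |].
  eapply Rle_trans; [apply Rplus_le_compat_r, Rabs_triang |].
  assert (Hu : unorm t = Rabs a + Rabs b) by reflexivity. rewrite Hu in *.
  lra.
Qed.

Lemma frame_increment c t : 0 <= t -> exists C, forall h m, 0 < h -> h < 1 ->
  (forall tau, t < tau < t + h -> m <= frame (c - PI / 2) tau * omega tau) ->
  (m - V * cos c - C * h) * h <= frame c (t + h) - frame c t.
Proof.
  intro Ht. destruct (frame_lipschitz (c - PI / 2) (t + 1)) as [L HL].
  exists (2 * k * V * L + (8 * k ^ 2 * V ^ 2 * unorm t + 8 * k * V ^ 2)).
  intros h m Hh Hh1 Hm.
  assert (Hfrozen := is_RInt_frozen_lower (frame (c - PI / 2)) omega t (t + h) (psi (t + h) - psi t)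
                       m (L * h) (2 * k * V) ltac:(lra) (psi_integral t (t + h) Ht ltac:(lra))).
  assert (Hosc : forall tau, t < tau < t + h -> Rabs (frame (c - PI / 2) tau - frame (c - PI / 2) t) <= L * h).
  { intros tau Htau. pose proof (HL t tau Ht ltac:(lra) ltac:(lra)).
    pose proof (Rabs_pos (frame (c - PI / 2) tau - frame (c - PI / 2) t)). nra. }
  specialize (Hfrozen Hosc (fun tau Htau => omega_bound tau ltac:(lra)) Hm).
  replace (t + h - t) with h in Hfrozen by ring.
  pose proof (frame_step c t h Ht ltac:(lra)) as Hstep. apply Rabs_le_between in Hstep.
  nra.
Qed.

Lemma rsin_increment t : 0 <= t -> exists C, forall h m, 0 < h -> h < 1 ->
  (forall tau, t < tau < t + h -> m <= rcos tau * omega tau) ->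
  (m - C * h) * h <= rsin (t + h) - rsin t.
Proof.
  intro Ht. destruct (frame_increment (PI / 2) t Ht) as [C HC].
  exists C. intros h m Hh Hh1 Hm.
  replace (PI / 2 - PI / 2) with 0 in HC by ring.
  pose proof (HC h m Hh Hh1 Hm) as H. rewrite cos_PI2 in H. lra.
Qed.

Lemma rcos_increment t : 0 <= t -> exists C, forall h M, 0 < h -> h < 1 ->
  (forall tau, t < tau < t + h -> - rsin tau * omega tau <= M) ->
  rcos (t + h) - rcos t <= (- V + M + C * h) * h.
Proof.
  intro Ht. destruct (frame_increment PI t Ht) as [C HC].
  exists C. intros h M Hh Hh1 HM.
  replace (PI - PI / 2) with (PI / 2) in HC by field.
  assert (Hm : forall tau, t < tau < t + h -> - M <= rsin tau * omega tau)
    by (intros tau Htau; specialize (HM tau Htau); lra).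
  pose proof (HC h (- M) Hh Hh1 Hm) as H. rewrite cos_PI, !frame_PI in H. lra.
Qed.

Lemma rsin_nonneg_persists t0 : 0 <= t0 -> 0 <= rsin t0 -> forall t, t0 <= t -> 0 <= rsin t.
Proof.
  intros Ht0 HB0 t Ht.
  enough (- rsin t <= 0) by lra. revert t Ht.
  apply (nonpos_persists (fun t => - rsin t) t0 (k * V)); [nra | | lra |].
  - intro b. destruct (frame_lipschitz (PI / 2) b) as [K HK].
    exists K. intros s t Hs Hst Htb. rewrite <- Rabs_Ropp.
    replace (- (- rsin t - - rsin s)) with (rsin t - rsin s) by ring. apply HK; lra.
  - intros t Ht HBt. destruct (rsin_increment t ltac:(lra)) as [C HC].
    destruct (frame_lipschitz (PI / 2) (t + 1)) as [L HL].
    exists (k * V * L + C), 1. split; [lra |]. intros h Hh Hh1.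
    assert (Hm : forall tau, t < tau < t + h -> - (k * V) * (- rsin t + L * h) <= rcos tau * omega tau).
    { intros tau Htau. eapply Rle_trans; [| apply rcos_omega_ge_neg; lra].
      pose proof (HL t tau ltac:(lra) ltac:(lra) ltac:(lra)) as Hlip.
      assert (Rabs (rsin tau) <= - rsin t + L * h).
      { pose proof (Rabs_pos (rsin tau - rsin t)). 
        rewrite <- (Rabs_left1 (rsin t)) by lra.
        replace (rsin tau) with (rsin t + (rsin tau - rsin t)) by ring.
        eapply Rle_trans; [apply Rabs_triang |]. nra. }
      assert (0 < k * V) by nra. nra. }
    pose proof (HC h _ Hh Hh1 Hm). nra.
Qed.

Lemma rsin_grows s m : 0 <= s -> (forall tau, s <= tau -> m <= rcos tau * omega tau) ->
  forall t, s <= t -> m * (t - s) <= rsin t - rsin s.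
Proof.
  intros Hs Hm t Hst.
  enough (m * (t - s) - rsin t <= m * (s - s) - rsin s) by lra.
  destruct (locally_lipschitz_plus _ _ 0 (locally_lipschitz_linear m s 0)
              (locally_lipschitz_scal (-1) _ 0 (frame_lipschitz (PI / 2))) t) as [K HK].
  apply (nonincreasing_of_upper_dini (fun tau => m * (tau - s) - rsin tau) s t K Hst).
  - intros a b Ha Hab Hb. replace (m * (b - s) - rsin b - (m * (a - s) - rsin a))
      with (m * (b - s) + -1 * rsin b - (m * (a - s) + -1 * rsin a)) by ring. apply HK; lra.
  - intros tau Htau. destruct (rsin_increment tau ltac:(lra)) as [C HC].
    apply (upper_dini_le_of_quadratic _ tau 0 C 1); [lra |]. intros h Hh Hh1.
    pose proof (HC h m Hh Hh1 ltac:(intros; apply Hm; lra)). nra.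
Qed.

Lemma rcos_eventually_nonpos : (forall t, 0 <= t -> rsin t < 0) -> exists t1, 0 <= t1 /\ rcos t1 <= 0.
Proof.
  intro HB. apply NNPP. intro Hn.
  assert (HA : forall t, 0 <= t -> 0 < rcos t).
  { intros t Ht. apply Rnot_le_lt. intro HA. apply Hn. exists t. split; assumption. }
  set (f := fun t => rcos t + V * (t - 0) + k / 2 * r2 t).
  assert (Hr2 : forall t, 0 <= r2 t) by (intro t; unfold r2; nra).
  set (T := (rcos 0 + k / 2 * r2 0 + 1) / V).
  assert (HT : 0 <= T).
  { unfold T. apply Rdiv_le_0_compat; [| lra]. pose proof (HA 0 ltac:(lra)). pose proof (Hr2 0). nra. }
  destruct (locally_lipschitz_plus _ _ 0
              (locally_lipschitz_plus _ _ 0 (frame_lipschitz 0) (locally_lipschitz_linear V 0 0))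
              (locally_lipschitz_scal (k / 2) _ 0 r2_lipschitz) T) as [K HK].
  assert (Hf : f T <= f 0).
  { apply (nonincreasing_of_upper_dini f 0 T K HT HK).
    intros t Ht. destruct (rcos_increment t ltac:(lra)) as [C HC].
    destruct (frame_lipschitz 0 (t + 1)) as [L HL].
    apply (upper_dini_le_of_quadratic f t 0 (k * V * L + C + k / 2 * (4 * k * V ^ 2 * unorm t + 2 * V ^ 2)) 1);
      [lra |].
    intros h Hh Hh1.
    assert (HM : forall tau, t < tau < t + h -> - rsin tau * omega tau <= k * V * (rcos t + L * h)).
    { intros tau Htau. eapply Rle_trans; [apply rsin_omega_le; [lra | left; apply HB; lra] |].
      rewrite Rmax_left by (left; apply HA; lra).
      pose proof (HL t tau ltac:(lra) ltac:(lra) ltac:(lra)) as Hlip. apply Rabs_le_between' in Hlip.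
      apply Rmult_le_compat_l; [nra |]. nra. }
    pose proof (HC h _ Hh Hh1 HM). pose proof (r2_step t h ltac:(lra) ltac:(lra)).
    unfold f. nra. }
  unfold f in Hf. pose proof (HA T HT). pose proof (Hr2 T).
  assert (V * (T - 0) = rcos 0 + k / 2 * r2 0 + 1) by (unfold T; field; lra).
  assert (0 <= k / 2 * r2 T) by (apply Rmult_le_pos; [lra | apply Hr2]).
  lra.
Qed.

Lemma rcos_le_linear t1 : (forall t, 0 <= t -> rsin t < 0) -> 0 <= t1 -> rcos t1 <= 0 ->
  forall t, t1 <= t -> rcos t <= - V * (t - t1).
Proof.
  intros HB Ht1 HA1 t Ht.
  enough (rcos t + V * (t - t1) <= 0) by lra. revert t Ht.
  apply (nonpos_persists (fun t => rcos t + V * (t - t1)) t1 (k * V)); [nra | | lra |].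
  - intro b. destruct (locally_lipschitz_plus _ _ 0 (frame_lipschitz 0) (locally_lipschitz_linear V t1 0) b)
      as [K HK]. exists K. intros s t Hs Hst Htb. apply HK; lra.
  - intros t Ht Hphi. destruct (rcos_increment t ltac:(lra)) as [C HC].
    destruct (frame_lipschitz 0 (t + 1)) as [L HL].
    exists (k * V * L + C), 1. split; [lra |]. intros h Hh Hh1.
    assert (HM : forall tau, t < tau < t + h ->
                 - rsin tau * omega tau <= k * V * (rcos t + V * (t - t1) + L * h)).
    { intros tau Htau. eapply Rle_trans; [apply rsin_omega_le; [lra | left; apply HB; lra] |].
      pose proof (HL t tau ltac:(lra) ltac:(lra) ltac:(lra)) as Hlip.
      pose proof (Rabs_pos (rcos tau - rcos t)). apply Rabs_le_between' in Hlip.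
      assert (L * (tau - t) <= L * h) by (apply Rmult_le_compat_l; nra).
      assert (0 <= V * (t - t1)) by nra.
      apply Rmult_le_compat_l; [nra |]. apply Rmax_lub; nra. }
    pose proof (HC h _ Hh Hh1 HM). nra.
Qed.

Lemma rsin_eventually_nonneg : exists t, 0 <= t /\ 0 <= rsin t.
Proof.
  apply NNPP. intro Hn.
  assert (HB : forall t, 0 <= t -> rsin t < 0).
  { intros t Ht. apply Rnot_le_lt. intro HB. apply Hn. exists t. split; assumption. }
  destruct (rcos_eventually_nonpos HB) as [t1 [Ht1 HA1]].
  pose proof (rcos_le_linear t1 HB Ht1 HA1) as HA.
  set (beta := - rsin t1).
  assert (Hbeta : 0 < beta) by (unfold beta; pose proof (HB t1 Ht1); lra).
  assert (HBlow : forall t, t1 <= t -> - beta <= rsin t).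
  { intros t Ht.
    assert (Hgrow := rsin_grows t1 0 Ht1 (fun tau Htau => rcos_omega_nonneg tau ltac:(lra)
                       ltac:(pose proof (HA tau Htau); nra)) t Ht).
    unfold beta. lra. }
  set (t3 := t1 + (beta + ra) / V).
  assert (Ht3 : t1 <= t3) by (unfold t3; assert (0 <= (beta + ra) / V) by (apply Rdiv_le_0_compat; lra); lra).
  assert (HA3 : forall tau, t3 <= tau -> rcos tau <= - (beta + ra)).
  { intros tau Htau. pose proof (HA tau ltac:(lra)).
    assert (V * (t3 - t1) = beta + ra) by (unfold t3; field; lra).
    assert (V * (t3 - t1) <= V * (tau - t1)) by (apply Rmult_le_compat_l; lra). lra. }
  assert (Hgrow := rsin_grows t3 (k * V * beta / 2) ltac:(lra)).
  specialize (Hgrow (fun tau Htau => rcos_omega_ge tau beta ltac:(lra) Hbeta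
                       ltac:(pose proof (HA3 tau Htau); lra) ltac:(pose proof (HA3 tau Htau); lra)
                       ltac:(apply Rabs_le; pose proof (HBlow tau ltac:(lra)); pose proof (HB tau ltac:(lra)); lra))
                    (t3 + 4 / (k * V)) ltac:(assert (0 <= 4 / (k * V)) by (apply Rdiv_le_0_compat; nra); lra)).
  assert (k * V * beta / 2 * (t3 + 4 / (k * V) - t3) = 2 * beta) by (field; nra).
  pose proof (HBlow t3 Ht3). pose proof (HB (t3 + 4 / (k * V)) ltac:(assert (0 <= 4 / (k * V)) by (apply Rdiv_le_0_compat; nra); lra)).
  lra.
Qed.

End ClosedLoop.

Theorem lemma4 (xT yT V k ra : R) (x y psi : R -> R) :
  0 < V -> 0 < k -> 0 <= ra ->
  closed_loop V k ra xT yT x y psi ->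
  (forall t, 0 <= t -> 0 < dist_T xT yT (x t) (y t)) ->
  exists tstar, 0 <= tstar /\
    forall t theta, tstar <= t ->
      is_bearing xT yT (x t) (y t) (psi t) theta ->
      0 <= theta <= PI.
Proof.
  intros HV Hk Hra Hloop Hdist.
  destruct (rsin_eventually_nonneg xT yT V k ra x y psi HV Hk Hra Hloop Hdist) as [ts [Hts Hrsin]].
  exists ts. split; [exact Hts |].
  intros t theta Ht [[Hth0 Hth2] [_ Hsin]].
  pose proof (rsin_nonneg_persists xT yT V k ra x y psi HV Hk Hra Hloop Hdist ts Hts Hrsin t Ht) as HB.
  unfold frame, u1, u2 in HB. rewrite rot_sub_PI2, <- Hsin in HB.
  pose proof (Hdist t ltac:(lra)).
  split; [exact Hth0 |].
  destruct (Rle_lt_dec theta PI) as [| Hgt]; [assumption |].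
  pose proof (sin_lt_0 theta Hgt Hth2). nra.
Qed.
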